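(* Let $\mathcal{A} \colon \mathbb{R}^n \to \mathbb{R}^m$ be a linear map with operator norm $\|\mathcal{A}\|$ (with respect to the Euclidean norms). Let $(\mathcal{D}_\theta)_{\theta \in \Theta}$ be a family of maps $\mathcal{D}_\theta \colon \mathbb{R}^n \to \mathbb{R}^n$, each of which is a contraction (Lipschitz with constant strictly less than $1$ in the Euclidean norm). Let $\Omega \colon \mathbb{R}^n \to \mathbb{R}^n$ be nonexpansive (Lipschitz with constant at most $1$). Let $s \in (0, 1/\|\mathcal{A}\|^2)$ and $\lambda \in (0,1)$. Define, for $\mathbf{x}, \mathbf{v} \in \mathbb{R}^n$ and $\mathbf{y} \in \mathbb{R}^m$, $$\mathcal{G}(\mathbf{x},\mathbf{y}) = \mathbf{x} - 2s\,\mathcal{A}^\top(\mathcal{A}\mathbf{x} - \mathbf{y}), \qquad \mathcal{N}_\theta(\mathbf{v}) = \Omega\bigl(\lambda\,\mathcal{D}_\theta(\mathbf{v}) + (1-\lambda)\,\mathbf{v}\bigr).$$ Then for every $\mathbf{y} \in \mathbb{R}^m$ and every $\theta \in \Theta$, the map $\mathbf{x} \mapsto \mathcal{N}_\theta(\mathcal{G}(\mathbf{x},\mathbf{y}))$ from $\mathbb{R}^n$ to $\mathbb{R}^n$ is a contraction and hence has exactly one fixed point $\mathbf{x}^\ast \in \mathbb{R}^n$. In particular, the map $\mathcal{B}_\theta \colon \mathbb{R}^m \to \mathbb{R}^n$, $\mathbf{y} \mapsto \mathbf{x}^\ast$, where $\mathbf{x}^\ast$ is the unique solution of $\mathbf{x}^\ast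 = \mathcal{N}_\theta(\mathcal{G}(\mathbf{x}^\ast,\mathbf{y}))$, is well defined.
   Context: $\mathcal{A}^\top$ denotes the transpose (adjoint) of $\mathcal{A}$. All norms on $\mathbb{R}^n$ and $\mathbb{R}^m$ are Euclidean, and $\|\mathcal{A}\|$ is the corresponding operator norm. *)

From HB Require Import structures.
From mathcomp Require Import all_boot all_order all_algebra.
From mathcomp Require Import boolp classical_sets reals.
Set Implicit Arguments. Unset Strict Implicit. Unset Printing Implicit Defensive.
Import Order.TTheory GRing.Theory Num.Theory.
Local Open Scope ring_scope.

Definition enorm (R : realType) (n : nat) (v : 'cV[R]_n) : R :=
  Num.sqrt (\sum_(i < n) v i 0 ^+ 2).

Definition opnorm (R : realType) (m n : nat) (A : 'M[R]_(m, n)) : R :=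
  reals.sup [set enorm (A *m x) | x in [set x : 'cV[R]_n | enorm x <= 1]]%classic.

Definition lipschitz_with (R : realType) (n : nat) (k : R)
  (f : 'cV[R]_n -> 'cV[R]_n) : Prop :=
  forall x y, enorm (f x - f y) <= k * enorm (x - y).

Definition contraction (R : realType) (n : nat) (f : 'cV[R]_n -> 'cV[R]_n) : Prop :=
  exists k : R, 0 <= k /\ k < 1 /\ lipschitz_with k f.

Definition nonexpansive (R : realType) (n : nat) (f : 'cV[R]_n -> 'cV[R]_n) : Prop :=
  lipschitz_with 1 f.

Definition Gmap (R : realType) (m n : nat) (A : 'M[R]_(m, n)) (s : R)
  (x : 'cV[R]_n) (y : 'cV[R]_m) : 'cV[R]_n :=
  x - (2 * s) *: (A^T *m (A *m x - y)).

Definition Nmap (R : realType) (n : nat) (Omega D : 'cV[R]_n -> 'cV[R]_n) (lam : R)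
  (v : 'cV[R]_n) : 'cV[R]_n :=
  Omega (lam *: D v + (1 - lam) *: v).

From Pilot Require Import Defs.
From HB Require Import structures.
From mathcomp Require Import all_boot all_order all_algebra.
From mathcomp Require Import interval_inference.
From mathcomp Require Import boolp classical_sets functions reals.
From mathcomp Require Import topology normedtype sequences.
From mathcomp Require Import ring lra.
(* [normedtype] has its own [contraction]; the statement refers to the one of [Defs]. *)
Import Pilot.Defs.
Import Order.TTheory GRing.Theory Num.Theory numFieldNormedType.Exports.
Set Implicit Arguments. Unset Strict Implicit. Unset Printing Implicit Defensive.
Local Open Scope ring_scope.

(* Expanding the square, |d - 2s A^T A d|^2 = |d|^2 - 4s |A d|^2 + 4s^2 |A^T A d|^2,
   and |A^T A d| <= ||A|| |A d| together with s ||A||^2 <= 1 shows that x |-> G(x, y)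
   is nonexpansive.  If D is k-Lipschitz with k < 1, the relaxation
   lam D + (1 - lam) id is (lam k + 1 - lam)-Lipschitz, and composing with the
   nonexpansive maps Omega and G(., y) keeps that constant below 1.  The fixed point
   is given by Banach's theorem for the max norm, which is within a factor sqrt n of
   the Euclidean norm, applied to an iterate of the map that contracts the max norm. *)

Section Euclidean.
Variables (R : realType) (n : nat).
Implicit Types (u v w : 'cV[R]_n).

Definition dot u v : R := \sum_i u i 0 * v i 0.

Lemma dotC u v : dot u v = dot v u.
Proof. by apply: eq_bigr => i _; rewrite mulrC. Qed.

Lemma dotDl u v w : dot (u + v) w = dot u w + dot v w.
Proof. by rewrite /dot -big_split; apply: eq_bigr => i _; rewrite mxE mulrDl. Qed.

Lemma dotZl a u v : dot (a *: u) v = a * dot u v.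
Proof. by rewrite /dot mulr_sumr; apply: eq_bigr => i _; rewrite mxE mulrA. Qed.

Lemma dotDr u v w : dot u (v + w) = dot u v + dot u w.
Proof. by rewrite dotC dotDl !(dotC u). Qed.

Lemma dotZr a u v : dot u (a *: v) = a * dot u v.
Proof. by rewrite dotC dotZl dotC. Qed.

Lemma dotNr u v : dot u (- v) = - dot u v.
Proof. by rewrite -scaleN1r dotZr mulN1r. Qed.

Lemma dotvv_ge0 v : 0 <= dot v v.
Proof. by apply: sumr_ge0 => i _; rewrite -expr2 sqr_ge0. Qed.

Lemma enormE v : enorm v = Num.sqrt (dot v v).
Proof. by congr Num.sqrt; apply: eq_bigr => i _; rewrite expr2. Qed.

Lemma enorm_ge0 v : 0 <= enorm v.
Proof. exact: sqrtr_ge0. Qed.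

Lemma enorm_sqr v : enorm v ^+ 2 = dot v v.
Proof. by rewrite enormE sqr_sqrtr ?dotvv_ge0. Qed.

Lemma enorm_eq0 v : (enorm v == 0) = (v == 0).
Proof.
apply/idP/eqP => [|->].
  rewrite -sqrf_eq0 enorm_sqr /dot psumr_eq0 => [/allP v0|i _]; last first.
    by rewrite -expr2 sqr_ge0.
  apply/matrixP => i j; rewrite (ord1 j) mxE.
  apply/eqP; rewrite -sqrf_eq0 expr2.
  by apply: (implyP (v0 i _)); rewrite ?mem_index_enum.
by rewrite enormE sqrtr_eq0 /dot big1 // => i _; rewrite mxE mul0r.
Qed.

Lemma enorm0 : enorm (0 : 'cV[R]_n) = 0.
Proof. by apply/eqP; rewrite enorm_eq0. Qed.

Lemma enormZ a v : enorm (a *: v) = `|a| * enorm v.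
Proof. by rewrite !enormE dotZl dotZr mulrA -expr2 sqrtrM ?sqr_ge0 // sqrtr_sqr. Qed.

Lemma enormN v : enorm (- v) = enorm v.
Proof. by rewrite -scaleN1r enormZ normrN1 mul1r. Qed.

Lemma enorm_sqrD u v :
  enorm (u + v) ^+ 2 = enorm u ^+ 2 + 2 * dot u v + enorm v ^+ 2.
Proof. by rewrite !enorm_sqr dotDl !dotDr (dotC v u); ring. Qed.

Lemma enorm_sqrB u v :
  enorm (u - v) ^+ 2 = enorm u ^+ 2 - 2 * dot u v + enorm v ^+ 2.
Proof. by rewrite enorm_sqrD dotNr enormN mulrN. Qed.

Lemma dot_le_enorm u v : dot u v <= enorm u * enorm v.
Proof.
have [->|u_neq0] := eqVneq u 0.
  by rewrite enorm0 mul0r /dot big1 // => i _; rewrite mxE mul0r.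
have [->|v_neq0] := eqVneq v 0.
  by rewrite enorm0 mulr0 /dot big1 // => i _; rewrite mxE mulr0.
have uv_gt0 : 0 < enorm u * enorm v.
  by rewrite mulr_gt0 // lt_def enorm_eq0 ?u_neq0 ?v_neq0 enorm_ge0.
have := sqr_ge0 (enorm (enorm v *: u - enorm u *: v)).
rewrite enorm_sqrB dotZl dotZr !enormZ !ger0_norm ?enorm_ge0 //.
nra.
Qed.

Lemma dot_norm_le_enorm u v : `|dot u v| <= enorm u * enorm v.
Proof. by rewrite ler_norml dot_le_enorm lerNl -dotNr -(enormN v) dot_le_enorm. Qed.

Lemma enormD u v : enorm (u + v) <= enorm u + enorm v.
Proof.
rewrite -ler_sqr ?nnegrE ?addr_ge0 ?enorm_ge0 // enorm_sqrD.
by have := dot_le_enorm u v; nra.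
Qed.

End Euclidean.

Section OperatorNorm.
Variables (R : realType) (m n : nat) (A : 'M[R]_(m, n)).

Lemma dot_trmx_mulmx w x : dot (A^T *m w) x = dot w (A *m x).
Proof.
rewrite /dot; under eq_bigr do rewrite mxE big_distrl.
rewrite exchange_big; apply: eq_bigr => j _ /=; rewrite mxE big_distrr.
by apply: eq_bigr => i _ /=; rewrite mxE; ring.
Qed.

Lemma mulmx_row_dot x i : (A *m x) i 0 = dot (row i A)^T x.
Proof. by rewrite mxE; apply: eq_bigr => j _; rewrite !mxE. Qed.

Lemma enorm_mulmx_le_frobenius x :
  enorm (A *m x) <= Num.sqrt (\sum_i enorm (row i A)^T ^+ 2) * enorm x.
Proof.
have frob_ge0 : 0 <= \sum_i enorm (row i A)^T ^+ 2.
  by apply: sumr_ge0 => i _; exact: sqr_ge0.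
rewrite -ler_sqr ?nnegrE ?mulr_ge0 ?enorm_ge0 ?sqrtr_ge0 //.
rewrite enorm_sqr exprMn sqr_sqrtr // mulr_suml; apply: ler_sum => i _.
rewrite -expr2 mulmx_row_dot -exprMn -real_normK ?num_real //.
by rewrite ler_sqr ?nnegrE ?mulr_ge0 ?enorm_ge0 // dot_norm_le_enorm.
Qed.

Lemma opnorm_has_sup :
  has_sup [set enorm (A *m x) | x in [set x | enorm x <= 1]]%classic.
Proof.
split; first by exists (enorm (A *m 0)), 0 => //=; rewrite enorm0 ler01.
exists (Num.sqrt (\sum_i enorm (row i A)^T ^+ 2)) => _ [x /= x_le1 <-].
apply: le_trans (enorm_mulmx_le_frobenius x) _.
by rewrite ler_piMr ?sqrtr_ge0.
Qed.

Lemma enorm_mulmx_le_opnorm1 x : enorm x <= 1 -> enorm (A *m x) <= opnorm A.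
Proof. by move=> x_le1; apply: sup_upper_bound opnorm_has_sup _ _; exists x. Qed.

Lemma opnorm_ge0 : 0 <= opnorm A.
Proof.
apply: le_trans (enorm_ge0 (A *m 0)) _.
by apply: enorm_mulmx_le_opnorm1; rewrite enorm0 ler01.
Qed.

Lemma enorm_mulmx_le x : enorm (A *m x) <= opnorm A * enorm x.
Proof.
have [x0|x_neq0] := eqVneq x 0; first by rewrite x0 mulmx0 !enorm0 mulr0.
have x_gt0 : 0 < enorm x by rewrite lt_def enorm_eq0 x_neq0 enorm_ge0.
have inv_ge0 : 0 <= (enorm x)^-1 by rewrite invr_ge0 enorm_ge0.
rewrite mulrC -ler_pdivrMl // -[(enorm x)^-1]ger0_norm // -enormZ scalemxAr.
by rewrite enorm_mulmx_le_opnorm1 // enormZ ger0_norm // mulVf ?gt_eqF.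
Qed.

Lemma enorm_trmx_mulmx_le w : enorm (A^T *m w) <= opnorm A * enorm w.
Proof.
have [z0|z_neq0] := eqVneq (A^T *m w) 0.
  by rewrite z0 enorm0 mulr_ge0 ?opnorm_ge0 ?enorm_ge0.
have z_gt0 : 0 < enorm (A^T *m w) by rewrite lt_def enorm_eq0 z_neq0 enorm_ge0.
rewrite -(ler_pM2r z_gt0) -expr2 enorm_sqr dot_trmx_mulmx.
apply: le_trans (dot_le_enorm _ _) _.
by rewrite [opnorm A * _]mulrC -mulrA ler_wpM2l ?enorm_ge0 // enorm_mulmx_le.
Qed.

End OperatorNorm.

Section Lipschitz.
Variables (R : realType) (n : nat).
Implicit Types (f g : 'cV[R]_n -> 'cV[R]_n).

Lemma lipschitz_with_comp k l f g : 0 <= k ->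
  lipschitz_with k f -> lipschitz_with l g -> lipschitz_with (k * l) (f \o g).
Proof.
move=> k_ge0 f_lip g_lip x y; rewrite -mulrA.
by apply: le_trans (f_lip _ _) _; rewrite ler_wpM2l.
Qed.

Lemma lipschitz_with_iter k f j : 0 <= k ->
  lipschitz_with k f -> lipschitz_with (k ^+ j) (iter j f).
Proof.
move=> k_ge0 f_lip; elim: j => [|j IHj] x y; first by rewrite expr0 mul1r.
by rewrite exprS; exact: (lipschitz_with_comp k_ge0 f_lip IHj).
Qed.

Lemma lipschitz_with_combination a b k l f g : 0 <= a -> 0 <= b ->
  lipschitz_with k f -> lipschitz_with l g ->
  lipschitz_with (a * k + b * l) (fun v => a *: f v + b *: g v).
Proof.
move=> a_ge0 b_ge0 f_lip g_lip x y.
have -> : a *: f x + b *: g x - (a *: f y + b *: g y) =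
          a *: (f x - f y) + b *: (g x - g y).
  by rewrite !scalerBr opprD addrACA.
apply: le_trans (enormD _ _) _.
rewrite !enormZ !ger0_norm // mulrDl -!mulrA.
by rewrite lerD // ler_wpM2l.
Qed.

Lemma contraction_relaxation lam f : 0 < lam -> lam <= 1 ->
  contraction f -> contraction (fun v => lam *: f v + (1 - lam) *: v).
Proof.
move=> lam_gt0 lam_le1 [k [k_ge0 [k_lt1 f_lip]]].
exists (lam * k + (1 - lam) * 1); split; last split.
- by rewrite addr_ge0 ?mulr_ge0 ?subr_ge0 // ltW.
- by rewrite mulr1; nra.
- apply: lipschitz_with_combination; rewrite ?subr_ge0 ?(ltW lam_gt0) //.
  by move=> x y; rewrite mul1r.
Qed.

Lemma nonexpansive_comp_contraction f g :
  nonexpansive f -> contraction g -> contraction (f \o g).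
Proof.
move=> f_lip [k [k_ge0 [k_lt1 g_lip]]]; exists k; split=> //; split=> //.
by rewrite -[k]mul1r; exact: lipschitz_with_comp.
Qed.

Lemma contraction_comp_nonexpansive f g :
  contraction f -> nonexpansive g -> contraction (f \o g).
Proof.
move=> [k [k_ge0 [k_lt1 f_lip]]] g_lip; exists k; split=> //; split=> //.
by rewrite -[k]mulr1; exact: lipschitz_with_comp.
Qed.

End Lipschitz.

Section GradientStep.
Variables (R : realType) (m n : nat) (A : 'M[R]_(m, n)) (s : R).

Lemma Gmap_sub x x' y : Gmap A s x y - Gmap A s x' y =
  (x - x') - (2 * s) *: (A^T *m (A *m (x - x'))).
Proof.
rewrite /Gmap !mulmxBr.
move: (A^T *m (A *m x)) (A^T *m (A *m x')) (A^T *m y) => P P' Q.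
by apply/matrixP => i j; rewrite !mxE; ring.
Qed.

Lemma nonexpansive_Gmap y : 0 <= s -> s * opnorm A ^+ 2 <= 1 ->
  nonexpansive (Gmap A s ^~ y).
Proof.
move=> s_ge0 sA_le1 x x'; rewrite mul1r Gmap_sub.
set d := x - x'; set z := A^T *m (A *m d).
have z_le : enorm z ^+ 2 <= opnorm A ^+ 2 * enorm (A *m d) ^+ 2.
  rewrite -exprMn ler_sqr ?nnegrE ?mulr_ge0 ?opnorm_ge0 ?enorm_ge0 //.
  exact: enorm_trmx_mulmx_le.
rewrite -ler_sqr ?nnegrE ?enorm_ge0 // enorm_sqrB dotZr dotC dot_trmx_mulmx.
rewrite -enorm_sqr enormZ ger0_norm ?mulr_ge0 // exprMn.
have := ler_wpM2l (sqr_ge0 (2 * s)) z_le.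
have := ler_wpM2r (mulr_ge0 s_ge0 (sqr_ge0 (enorm (A *m d)))) sA_le1.
nra.
Qed.

End GradientStep.

(* Makes real matrices a [completeNormedModType], for [banach_fixed_point]. *)
HB.instance Definition _ (R : realType) (m n : nat) := Complete.on 'M[R]_(m, n).

Section FixedPoint.
Variables (R : realType) (n : nat).
Implicit Types (v : 'cV[R]_n) (F : 'cV[R]_n -> 'cV[R]_n).

Lemma mx_norm_le_enorm v : `|v| <= enorm v.
Proof.
rewrite [leLHS]mx_normrE; apply: bigmax_le => [|[i j] _]; first exact: enorm_ge0.
rewrite (ord1 j) /= enormE -sqrtr_sqr ler_wsqrtr // /dot (bigD1 i) //= -expr2 lerDl.
by apply: sumr_ge0 => k _; rewrite -expr2 sqr_ge0.
Qed.

Lemma enorm_le_mx_norm v : enorm v <= Num.sqrt n%:R * `|v|.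
Proof.
rewrite -ler_sqr ?nnegrE ?mulr_ge0 ?enorm_ge0 ?sqrtr_ge0 //.
rewrite enorm_sqr exprMn sqr_sqrtr ?ler0n //.
have -> : n%:R * `|v| ^+ 2 = \sum_(i < n) `|v| ^+ 2.
  by rewrite sumr_const card_ord mulr_natl.
apply: ler_sum => i _; rewrite -expr2 -real_normK ?num_real // ler_sqr ?nnegrE //.
rewrite [leRHS]mx_normrE; apply/bigmax_geP; right; by exists (i, 0).
Qed.

Lemma exists_expr_lt1 (q C : R) : `|q| < 1 -> exists k, q ^+ k * C < 1.
Proof.
move=> q_lt1; have : ((fun k => q ^+ k * C) @ \oo --> 0)%classic.
  by rewrite -(mul0r C); apply: cvgM (cvg_expr _) (cvg_cst C).
by move=> /cvgr_lt /(_ _ ltr01) [N _ HN]; exists N; exact: (HN N (leqnn N)).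
Qed.

Lemma contraction_exists_fixpoint F : contraction F -> exists x, x = F x.
Proof.
move=> [q [q_ge0 [q_lt1 F_lip]]].
have [k Fk_lt1] : exists k, q ^+ k * Num.sqrt n%:R < 1.
  by apply: exists_expr_lt1; rewrite ger0_norm.
have Fk_ge0 : 0 <= q ^+ k * Num.sqrt n%:R by rewrite mulr_ge0 ?exprn_ge0 ?sqrtr_ge0.
have Fk_ctr : is_contraction (totalfun (iter k F)).
  exists (NngNum Fk_ge0); split => // -[x y] _ /=.
  apply: le_trans (mx_norm_le_enorm _) _.
  apply: le_trans (lipschitz_with_iter k q_ge0 F_lip x y) _.
  by rewrite -mulrA ler_wpM2l ?exprn_ge0 ?enorm_le_mx_norm.
have [x _ x_fix] := banach_fixed_point Fk_ctr closedT (ex_intro _ 0 I).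
have Fx_fix : F x = iter k F (F x) by rewrite -iterSr iterS -x_fix.
by exists x; exact: contraction_fixpoint_unique Fk_ctr I I x_fix Fx_fix.
Qed.

Lemma contraction_exists_unique_fixpoint F : contraction F -> exists! x, x = F x.
Proof.
move=> F_ctr; have [x x_fix] := contraction_exists_fixpoint F_ctr.
exists x; split=> // y y_fix; move: F_ctr => [q [_ [q_lt1 F_lip]]].
apply/subr0_eq/eqP; rewrite -enorm_eq0 eq_le enorm_ge0 andbT.
have := F_lip x y; rewrite -x_fix -y_fix.
by have := enorm_ge0 (x - y); nra.
Qed.

End FixedPoint.

Theorem mainTheorem1 (R : realType) (m n : nat) (A : 'M[R]_(m, n))
  (Theta : Type) (D : Theta -> 'cV[R]_n -> 'cV[R]_n) (Omega : 'cV[R]_n -> 'cV[R]_n)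
  (s lam : R) :
  (forall th, contraction (D th)) ->
  nonexpansive Omega ->
  0 < s -> s * opnorm A ^+ 2 < 1 ->
  0 < lam -> lam < 1 ->
  forall (y : 'cV[R]_m) (th : Theta),
    contraction (fun x => Nmap Omega (D th) lam (Gmap A s x y)) /\
    (exists! xs : 'cV[R]_n, xs = Nmap Omega (D th) lam (Gmap A s xs y)).
Proof.
move=> D_ctr Omega_nexp s_gt0 sA_lt1 lam_gt0 lam_lt1 y th.
have step_ctr : contraction
    (Omega \o (fun v => lam *: D th v + (1 - lam) *: v) \o (Gmap A s ^~ y)).
  apply: contraction_comp_nonexpansive.
    apply: nonexpansive_comp_contraction Omega_nexp _.
    exact: contraction_relaxation lam_gt0 (ltW lam_lt1) (D_ctr th).
  exact: nonexpansive_Gmap (ltW s_gt0) (ltW sA_lt1).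
split; first exact: step_ctr.
exact: contraction_exists_unique_fixpoint step_ctr.
Qed.
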